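(* Let $G$ be a $(2K_2, HVN)$-free graph. Then $\chi(G)\le\omega(G)+3$.
   Context: All graphs are finite, simple and undirected. $2K_2$ is the disjoint union of two edges. $HVN$ is the graph consisting of a $K_4$ together with one further vertex adjacent to exactly two vertices of the $K_4$. A graph is $\mathcal F$-free if it has no induced subgraph isomorphic to a member of $\mathcal F$. $\chi$ is the chromatic number and $\omega$ the clique number. *)

From mathcomp Require Import all_boot.
Set Implicit Arguments. Unset Strict Implicit. Unset Printing Implicit Defensive.

Definition simple_graph (T : finType) (e : rel T) : Prop :=
  symmetric e /\ irreflexive e.

Definition induces (T : finType) (e : rel T) (k : nat) (h : rel 'I_k) : Prop :=
  exists f : 'I_k -> T, injective f /\ forall i j, e (f i) (f j) = h i j.

Definition twoK2 : rel 'I_4 := fun i j =>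
  let a := nat_of_ord i in let b := nat_of_ord j in
  ((a == 0) && (b == 1)) || ((a == 1) && (b == 0)) ||
  ((a == 2) && (b == 3)) || ((a == 3) && (b == 2)).

(* HVN : K_4 on vertices 0,1,2,3 plus vertex 4 adjacent exactly to 0 and 1. *)
Definition HVN : rel 'I_5 := fun i j =>
  let a := nat_of_ord i in let b := nat_of_ord j in
  [|| (a != b) && (a < 4) && (b < 4),
      (a == 4) && (b < 2) | (b == 4) && (a < 2)].

Definition is_clique (T : finType) (e : rel T) (S : {set T}) : bool :=
  [forall x in S, forall y in S, (x != y) ==> e x y].

Definition clique_number (T : finType) (e : rel T) : nat :=
  \max_(S : {set T} | is_clique e S) #|S|.

Definition colorable (T : finType) (e : rel T) (k : nat) : bool :=
  [exists c : {ffun T -> 'I_k}, forall x, forall y, e x y ==> (c x != c y)].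

(* chromatic number: least k admitting a proper k-colouring
   (for a simple graph some k <= #|T| always works). *)
Definition chromatic_number (T : finType) (e : rel T) : nat :=
  \big[minn/#|T|]_(k < #|T|.+1 | colorable e k) k.

From mathcomp Require Import all_boot zify.
Set Implicit Arguments. Unset Strict Implicit. Unset Printing Implicit Defensive.

(* Fix a maximum clique A, of size w. Every vertex x has a nonempty set N(x) of
   non-neighbours in A (N(x) = {x} when x is in A). Adjacent vertices x, y cannot
   have N(x) = N(y) = {a}, since replacing a by x and y in A would give a larger
   clique, and cannot have two common non-neighbours c, d, since xy, cd would
   induce a 2K2. Hence colouring x by N(x) when |N(x)| <= 2 and by a 2-subset of
   N(x) otherwise is proper; for w <= 3 it uses at most w + C(w,2) <= w + 3
   colours. For w >= 4, a vertex with two non-neighbours in A has at most one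
   neighbour there (two would induce an HVN), so two such vertices have at least
   w - 2 >= 2 common non-neighbours and cannot be adjacent: colouring x by N(x)
   when |N(x)| = 1 and all other vertices outside A alike uses w + 1 colours. *)

Lemma twoK2_sym : symmetric twoK2.
Proof.
by move=> i j; rewrite /twoK2; case: (nat_of_ord i) => [|[|[|[|?]]]];
  case: (nat_of_ord j) => [|[|[|[|?]]]].
Qed.

Lemma twoK2_irr : irreflexive twoK2.
Proof. by move=> i; rewrite /twoK2; case: (nat_of_ord i) => [|[|[|[|?]]]]. Qed.

Lemma HVN_sym : symmetric HVN.
Proof.
by move=> i j; rewrite /HVN; case: (nat_of_ord i) => [|[|[|[|[|?]]]]];
  case: (nat_of_ord j) => [|[|[|[|[|?]]]]] //=; rewrite ?andbF.
Qed.

Lemma HVN_irr : irreflexive HVN.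
Proof. by move=> i; rewrite /HVN eqxx; case: (nat_of_ord i) => [|[|[|[|[|?]]]]]. Qed.

Lemma bigmin_le (I : eqType) (s : seq I) (P : pred I) (F : I -> nat) d x :
  x \in s -> P x -> \big[minn/d]_(i <- s | P i) F i <= F x.
Proof.
elim: s => // y s IH; rewrite inE big_cons => /orP [/eqP <- -> | xs Px].
  by rewrite geq_minl.
by case: (P y); rewrite ?geq_min IH ?orbT.
Qed.

Lemma chromatic_number_le (T : finType) (e : rel T) k :
  colorable e k -> chromatic_number e <= k.
Proof.
move=> ek; have [kT | Tk] := leqP k #|T|.
  exact: bigmin_le (mem_index_enum (Ordinal (kT : k < #|T|.+1))) ek.
apply: leq_trans (ltnW Tk); apply: (big_ind (fun m => m <= #|T|)) => //.
  by move=> m n mT _; rewrite geq_min mT.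
by move=> i _; rewrite -ltnS.
Qed.

Lemma colorable_of_fun (T U : finType) (e : rel T) (c : T -> U) (P : {set U}) k :
  (forall x y, e x y -> c x != c y) -> (forall x, c x \in P) -> #|P| <= k ->
  colorable e k.
Proof.
move=> c_proper cP Pk.
have c_lt x : index (c x) (enum P) < k by rewrite (leq_trans _ Pk) // cardE index_mem mem_enum.
apply/existsP; exists [ffun x => Ordinal (c_lt x)].
apply/forallP=> x; apply/forallP=> y; apply/implyP=> exy; rewrite !ffunE.
apply: contra (c_proper x y exy) => /eqP [] /(congr1 (nth (c x) (enum P))).
by rewrite !nth_index ?mem_enum // => ->.
Qed.

Lemma card_small_subsets (T : finType) (B : {set T}) :
  #|[set S : {set T} | S \subset B & 0 < #|S| <= 2]| <= #|B| + 'C(#|B|, 2).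
Proof.
rewrite -(cards_draws B 2) -[X in X + _](bin1 #|B|) -(cards_draws B 1).
apply: leq_trans (leq_card_setU _ _); apply: subset_leq_card.
apply/subsetP => S; rewrite !inE => /andP [-> /andP [S_gt0 S_le2]] /=.
by case: #|S| S_gt0 S_le2 => [|[|[|]]].
Qed.

Section SimpleGraph.

Variables (T : finType) (e : rel T).
Hypothesis e_simple : simple_graph e.

Let e_sym : symmetric e := proj1 e_simple.
Let e_irr : irreflexive e := proj2 e_simple.

Lemma adj_neq u v : e u v -> u != v.
Proof. by move=> euv; apply: contraTneq euv => ->; rewrite e_irr. Qed.

Lemma adj_nonadj_neq w u v : e w u -> ~~ e w v -> u != v.
Proof. by move=> ewu; apply: contraNneq => <-. Qed.

Lemma induces_of_uniq k (h : rel 'I_k) (s : seq T) (x0 : T) :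
  symmetric h -> irreflexive h -> uniq s -> size s = k ->
  (forall i j : 'I_k, i < j -> e (nth x0 s i) (nth x0 s j) = h i j) ->
  induces e h.
Proof.
move=> h_sym h_irr s_uniq s_size upper.
exists (fun i => nth x0 s i); split.
  by move=> i j /eqP; rewrite nth_uniq ?s_size // => /eqP /val_inj.
move=> i j; case: (ltngtP i j) => [ij | ji | /val_inj <-]; first exact: upper.
  by rewrite e_sym h_sym upper.
by rewrite e_irr h_irr.
Qed.

Lemma induces_twoK2 p0 p1 p2 p3 :
  e p0 p1 -> e p2 p3 -> ~~ e p0 p2 -> ~~ e p0 p3 -> ~~ e p1 p2 -> ~~ e p1 p3 ->
  induces e twoK2.
Proof.
move=> e01 e23 n02 n03 n12 n13.
apply: (@induces_of_uniq _ _ [:: p0; p1; p2; p3] p0 twoK2_sym twoK2_irr) => //.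
  have e10 : e p1 p0 by rewrite e_sym.
  rewrite /= !inE !negb_or (adj_neq e01) (adj_neq e23) (adj_nonadj_neq e10 n12).
  by rewrite (adj_nonadj_neq e10 n13) (adj_nonadj_neq e01 n02) (adj_nonadj_neq e01 n03).
move: n02 n03 n12 n13 => /negbTE n02 /negbTE n03 /negbTE n12 /negbTE n13.
by move=> [[|[|[|[|?]]]] ?] [[|[|[|[|?]]]] ?].
Qed.

Lemma induces_HVN p0 p1 p2 p3 p4 :
  e p0 p1 -> e p0 p2 -> e p0 p3 -> e p1 p2 -> e p1 p3 -> e p2 p3 ->
  e p0 p4 -> e p1 p4 -> ~~ e p2 p4 -> ~~ e p3 p4 ->
  induces e HVN.
Proof.
move=> e01 e02 e03 e12 e13 e23 e04 e14 n24 n34.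
apply: (@induces_of_uniq _ _ [:: p0; p1; p2; p3; p4] p0 HVN_sym HVN_irr) => //.
  have e32 : e p3 p2 by rewrite e_sym.
  rewrite /= !inE !negb_or (adj_neq e01) (adj_neq e02) (adj_neq e03) (adj_neq e04).
  rewrite (adj_neq e12) (adj_neq e13) (adj_neq e14) (adj_neq e23).
  by rewrite (adj_nonadj_neq e32 n34) (adj_nonadj_neq e23 n24).
move: n24 n34 => /negbTE n24 /negbTE n34.
by move=> [[|[|[|[|[|?]]]]] ?] [[|[|[|[|[|?]]]]] ?].
Qed.

Lemma clique_adj (S : {set T}) u v :
  is_clique e S -> u \in S -> v \in S -> u != v -> e u v.
Proof. by move=> /forallP/(_ u)/implyP cS /cS/forallP/(_ v)/implyP vS /vS/implyP. Qed.

Lemma clique_subset (S B : {set T}) : S \subset B -> is_clique e B -> is_clique e S.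
Proof.
move=> /subsetP SB cB; apply/forallP=> u; apply/implyP=> uS.
by apply/forallP=> v; apply/implyP=> vS; apply/implyP; apply: clique_adj cB _ _; apply: SB.
Qed.

Lemma clique_setU1 (S : {set T}) x :
  is_clique e S -> {in S, forall y, e x y} -> is_clique e (x |: S).
Proof.
move=> cS xS; apply/forallP=> u; apply/implyP=> uS; apply/forallP=> v; apply/implyP=> vS.
apply/implyP; rewrite !in_setU1 in uS vS.
case/orP: uS => [/eqP->|uS]; case/orP: vS => [/eqP->|vS].
- by rewrite eqxx.
- by move=> _; apply: xS.
- by move=> _; rewrite e_sym; apply: xS.
- exact: clique_adj cS uS vS.
Qed.

Lemma clique_card_le (S : {set T}) : is_clique e S -> #|S| <= clique_number e.
Proof. by move=> cS; apply: (leq_bigmax_cond (F := fun S : {set T} => #|S|)). Qed.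

Lemma exists_max_clique : exists2 A : {set T}, is_clique e A & #|A| = clique_number e.
Proof.
have clique0 : is_clique e set0 by apply/forallP => x; rewrite inE.
have [A cA Amax] := arg_maxnP (fun S : {set T} => #|S|) clique0.
exists A => //; apply/eqP; rewrite eqn_leq clique_card_le //.
by apply/bigmax_leqP => S /Amax.
Qed.

Section MaximumClique.

Variable A : {set T}.
Hypotheses (A_clique : is_clique e A) (A_max : forall S, is_clique e S -> #|S| <= #|A|).

Definition non_nbrs x := [set a in A | ~~ e x a].

Lemma in_non_nbrs x a : (a \in non_nbrs x) = (a \in A) && ~~ e x a.
Proof. by rewrite inE. Qed.

Lemma non_nbrs_subset x : non_nbrs x \subset A.
Proof. by apply/subsetP => a; rewrite inE => /andP []. Qed.

Lemma mem_non_nbrs_self x : x \in A -> x \in non_nbrs x.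
Proof. by move=> xA; rewrite inE xA e_irr. Qed.

Lemma non_nbrs_gt0 x : 0 < #|non_nbrs x|.
Proof.
case xA: (x \in A); first by apply/card_gt0P; exists x; apply: mem_non_nbrs_self.
rewrite card_gt0; apply/negP => /eqP nx0.
have xA_adj : {in A, forall a, e x a}.
  by move=> a aA; apply: contraT => nxa; have := in_set0 a; rewrite -nx0 inE aA nxa.
by have := A_max (clique_setU1 A_clique xA_adj); rewrite cardsU1 xA ltnn.
Qed.

Lemma non_nbrs1_adj x a b : non_nbrs x = [set a] -> b \in A -> b != a -> e x b.
Proof.
by move=> nx bA; apply: contraNT => nxb; rewrite -in_set1 -nx inE bA.
Qed.

Lemma non_nbrs1_notin x a : non_nbrs x = [set a] -> x \notin A :\ a.
Proof.
move=> nx; rewrite in_setD1 negb_and negbK; case xA: (x \in A); last by rewrite orbT.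
by rewrite orbF -in_set1 -nx mem_non_nbrs_self.
Qed.

Lemma non_nbrs1_nonadj x y a :
  non_nbrs x = [set a] -> non_nbrs y = [set a] -> ~~ e x y.
Proof.
move=> nx ny; apply/negP => exy.
have aA : a \in A by apply: (subsetP (non_nbrs_subset x)); rewrite nx set11.
have yS : is_clique e (y |: (A :\ a)).
  apply: clique_setU1; first exact: clique_subset (subD1set A a) A_clique.
  by move=> b; rewrite in_setD1 => /andP [ba bA]; apply: non_nbrs1_adj ny bA ba.
have xyS : is_clique e (x |: (y |: (A :\ a))).
  apply: clique_setU1 yS _ => b; rewrite in_setU1 in_setD1 => /orP [/eqP -> //|/andP [ba bA]].
  exact: non_nbrs1_adj nx bA ba.
have := A_max xyS; rewrite !cardsU1 in_setU1 negb_or (adj_neq exy) /=.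
by rewrite (non_nbrs1_notin nx) (non_nbrs1_notin ny) (cardsD1 a A) aA /= ltnn.
Qed.

Hypothesis no_2K2 : ~ induces e twoK2.

Lemma common_non_nbrs_le1 x y : e x y -> #|non_nbrs x :&: non_nbrs y| <= 1.
Proof.
move=> exy; rewrite leqNgt; apply/negP => /card_gt1P [c [d [+ + cd]]].
rewrite !in_setI !in_non_nbrs => /andP [/andP [cA nxc] /andP [_ nyc]].
move=> /andP [/andP [dA nxd] /andP [_ nyd]].
exact: no_2K2 (induces_twoK2 exy (clique_adj A_clique cA dA cd) nxc nxd nyc nyd).
Qed.

Definition trim_non_nbrs x :=
  if #|non_nbrs x| <= 2 then non_nbrs x else non_nbrs x :\ odflt x [pick a in non_nbrs x].

Lemma trim_non_nbrs_subset x : trim_non_nbrs x \subset non_nbrs x.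
Proof. by rewrite /trim_non_nbrs; case: ifP => _; rewrite ?subD1set. Qed.

Lemma card_trim_non_nbrs x :
  #|trim_non_nbrs x| = if #|non_nbrs x| <= 2 then #|non_nbrs x| else #|non_nbrs x|.-1.
Proof.
rewrite /trim_non_nbrs; case: ifP => // _; case: pickP => [a ax | none].
  by rewrite [in RHS](cardsD1 a) ax.
by have := non_nbrs_gt0 x; rewrite (eq_card0 none).
Qed.

Lemma trim_non_nbrs_gt0 x : 0 < #|trim_non_nbrs x|.
Proof.
by rewrite card_trim_non_nbrs; have := non_nbrs_gt0 x; case: ifP => [_ //|]; lia.
Qed.

Lemma trim_non_nbrs_le1 x : #|trim_non_nbrs x| <= 1 -> trim_non_nbrs x = non_nbrs x.
Proof. by rewrite card_trim_non_nbrs /trim_non_nbrs; case: ifP => //; lia. Qed.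

Lemma trim_non_nbrs_proper x y : e x y -> trim_non_nbrs x != trim_non_nbrs y.
Proof.
move=> exy; apply/negP => /eqP txy.
have [small | big] := leqP #|trim_non_nbrs x| 1.
  have /cards1P [a xa] : #|trim_non_nbrs x| == 1 by rewrite eqn_leq small trim_non_nbrs_gt0.
  have nx : non_nbrs x = [set a] by rewrite -trim_non_nbrs_le1 // xa cards1.
  have ny : non_nbrs y = [set a] by rewrite -trim_non_nbrs_le1 -txy xa ?cards1.
  exact: negP (non_nbrs1_nonadj nx ny) exy.
have : trim_non_nbrs x \subset non_nbrs x :&: non_nbrs y.
  by rewrite subsetI trim_non_nbrs_subset txy trim_non_nbrs_subset.
by move=> /subset_leq_card/(leq_trans big); rewrite ltnNge common_non_nbrs_le1.
Qed.

Lemma colorable_small_clique : #|A| <= 3 -> colorable e (#|A| + 3).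
Proof.
move=> A_small; apply: (colorable_of_fun trim_non_nbrs_proper
  (P := [set S : {set T} | S \subset A & 0 < #|S| <= 2])).
  move=> x; rewrite inE trim_non_nbrs_gt0 (subset_trans (trim_non_nbrs_subset x)) /=.
    rewrite card_trim_non_nbrs; have := subset_leq_card (non_nbrs_subset x).
    by case: ifP => //; lia.
  exact: non_nbrs_subset.
apply: leq_trans (card_small_subsets A) _; rewrite leq_add2l.
by case: #|A| A_small => [|[|[|[|]]]].
Qed.

Hypothesis no_HVN : ~ induces e HVN.

Lemma card_nbrs_le1 z : 1 < #|non_nbrs z| -> #|A :\: non_nbrs z| <= 1.
Proof.
move=> /card_gt1P [c [d [+ + cd]]]; rewrite !in_non_nbrs => /andP [cA nzc] /andP [dA nzd].
rewrite leqNgt; apply/negP => /card_gt1P [a [b [+ + ab]]].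
rewrite !in_setD !in_non_nbrs => /andP [+ aA] /andP [+ bA].
rewrite aA bA !negbK => eza ezb.
apply: no_HVN (@induces_HVN _ _ _ _ z (clique_adj A_clique aA bA ab) _ _ _ _
                           (clique_adj A_clique cA dA cd) _ _ _ _).
- exact: clique_adj A_clique aA cA (adj_nonadj_neq eza nzc).
- exact: clique_adj A_clique aA dA (adj_nonadj_neq eza nzd).
- exact: clique_adj A_clique bA cA (adj_nonadj_neq ezb nzc).
- exact: clique_adj A_clique bA dA (adj_nonadj_neq ezb nzd).
- by rewrite e_sym.
- by rewrite e_sym.
- by rewrite e_sym.
- by rewrite e_sym.
Qed.

Lemma non_nbrs_gt1_nonadj x y :
  3 < #|A| -> 1 < #|non_nbrs x| -> 1 < #|non_nbrs y| -> ~~ e x y.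
Proof.
move=> A_large nx ny; apply/negP => exy.
have A_le : #|A| <= #|non_nbrs x :&: non_nbrs y| + 2.
  rewrite -(cardsID (non_nbrs x :&: non_nbrs y) A) (setIidPr _); last first.
    exact: subset_trans (subsetIl _ _) (non_nbrs_subset x).
  rewrite leq_add2l setDIr; apply: leq_trans (leq_card_setU _ _) _.
  exact: leq_add (card_nbrs_le1 nx) (card_nbrs_le1 ny).
by have := common_non_nbrs_le1 exy; lia.
Qed.

Definition single_non_nbr x := if #|non_nbrs x| == 1 then non_nbrs x else set0.

Lemma single_non_nbr_proper :
  3 < #|A| -> forall x y, e x y -> single_non_nbr x != single_non_nbr y.
Proof.
move=> A_large x y exy; rewrite /single_non_nbr.
have nonempty z : non_nbrs z != set0 by rewrite -card_gt0 non_nbrs_gt0.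
case: ifP => [/cards1P [a nx] | nx]; case: ifP => [/cards1P [b ny] | ny].
- by apply: contraTneq exy => nxy; apply: (non_nbrs1_nonadj nx); rewrite -nxy.
- exact: nonempty.
- by rewrite eq_sym nonempty.
- have gt1 z : #|non_nbrs z| != 1 -> 1 < #|non_nbrs z|.
    by have := non_nbrs_gt0 z; lia.
  have := non_nbrs_gt1_nonadj A_large (gt1 _ (negbT nx)) (gt1 _ (negbT ny)).
  by rewrite exy.
Qed.

Lemma colorable_large_clique : 3 < #|A| -> colorable e (#|A| + 1).
Proof.
move=> A_large; apply: (colorable_of_fun (single_non_nbr_proper A_large)
  (P := set0 |: [set [set a] | a in A])).
  move=> x; rewrite /single_non_nbr in_setU1; case: ifP => [/cards1P [a nx] | _].
    rewrite nx imset_f ?orbT //.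
    by apply: (subsetP (non_nbrs_subset x)); rewrite nx set11.
  by rewrite eqxx.
rewrite cardsU1 addnC; apply: leq_add; first exact: leq_imset_card.
exact: leq_b1.
Qed.

End MaximumClique.

End SimpleGraph.

Theorem corollary3p8 (T : finType) (e : rel T) :
  simple_graph e ->
  ~ induces e twoK2 ->
  ~ induces e HVN ->
  chromatic_number e <= clique_number e + 3.
Proof.
move=> e_simple no_2K2 no_HVN.
have [A A_clique A_card] := exists_max_clique e.
have A_max S : is_clique e S -> #|S| <= #|A| by rewrite A_card; apply: clique_card_le.
rewrite -A_card; have [A_small | A_large] := leqP #|A| 3.
  exact/chromatic_number_le/(colorable_small_clique e_simple A_clique A_max no_2K2).
have := colorable_large_clique e_simple A_clique A_max no_2K2 no_HVN A_large.
by move/chromatic_number_le/leq_trans; apply; rewrite leq_add2l.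
Qed.
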